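(* Let $n\in\mathbb{N}_+$ and suppose $X\sim\mathsf{Poi}(\lambda_1)$ or $X\sim\mathsf{B}(n,\frac{\lambda_1}{n})$, where $0\le\lambda_1\le n$. There exist universal constants $M_1>0$, $M_2>0$ (not depending on $\lambda_1,\lambda_2,n$) such that: (1) if $0\le\lambda_2\le n$ and $\lambda_2\ge\lambda_1$, then $(\lambda_2-\lambda_1)P(X\ge\lambda_2)\le M_1\,(\lambda_2\wedge\sqrt{\lambda_2})$; (2) if $\lambda_1\ge\lambda_2\ge1$, then $(\lambda_1-\lambda_2)P(X\le\lambda_2)\le M_2\sqrt{\lambda_2}$.
   Context: $\mathsf{Poi}(\lambda)$ is the Poisson distribution with mean $\lambda$, $\mathsf{B}(n,p)$ the binomial distribution; $a\wedge b=\min\{a,b\}$. *)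

From Stdlib Require Import Reals Arith.
From Coquelicot Require Import Coquelicot.
Open Scope R_scope.

Definition poisson_pmf (lam : R) (k : nat) : R :=
  exp (- lam) * lam ^ k / INR (Factorial.fact k).

Definition binom_pmf (n : nat) (p : R) (k : nat) : R :=
  if Nat.leb k n then Binomial.C n k * p ^ k * (1 - p) ^ (n - k) else 0.

Inductive law := Poi | Bin.

Definition law_pmf (L : law) (n : nat) (lam : R) : nat -> R :=
  match L with
  | Poi => poisson_pmf lam
  | Bin => binom_pmf n (lam / INR n)
  end.

Definition prob_ge (f : nat -> R) (a : R) : R :=
  Series (fun k => if Rle_dec a (INR k) then f k else 0).
Definition prob_le (f : nat -> R) (a : R) : R :=
  Series (fun k => if Rle_dec (INR k) a then f k else 0).

(* Chebyshev's inequality, with Var X <= lam1 for both laws.  Writing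
   d = |lam2 - lam1| and P for the tail probability, P d^2 <= Var X <= lam1,
   hence (d P)^2 <= P (P d^2) <= lam1.  For the upper tail this gives
   d P <= sqrt lam2, and trivially d P <= d <= lam2.  For the lower tail
   lam1 = lam2 + d, so x = d P satisfies x^2 <= lam2 + x, i.e.
   x <= sqrt lam2 + 1 <= 2 sqrt lam2 when lam2 >= 1. *)

From Stdlib Require Import Reals Lra Lia Psatz.
From Coquelicot Require Import Coquelicot.
Open Scope R_scope.

Lemma is_series_shift (u v : nat -> R) (l : R) :
  u 0%nat = 0 -> (forall j, u (S j) = v j) -> is_series v l -> is_series u l.
Proof.
  intros Hu0 HuS Hv. apply is_series_decr_1.
  change (is_series (fun k => u (S k)) (l + - u 0%nat)).
  rewrite Hu0, Ropp_0, Rplus_0_r.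
  exact (is_series_ext _ _ _ (fun j => eq_sym (HuS j)) Hv).
Qed.

(* [is_series_scal] is stated with the module operation [scal]; this form exposes
   [Rmult] to [rewrite] and [ring]. *)
Lemma is_series_scal_R (c : R) (a : nat -> R) (l : R) :
  is_series a l -> is_series (fun k => c * a k) (c * l).
Proof. exact (is_series_scal c a l). Qed.

Lemma is_series_finite_support (f : nat -> R) (N : nat) :
  (forall k, (N < k)%nat -> f k = 0) -> is_series f (sum_f_R0 f N).
Proof.
  intros Hz.
  assert (Hk : forall k, sum_f_R0 f (N + k) = sum_f_R0 f N).
  { induction k as [|k IH].
    - now rewrite Nat.add_0_r.
    - rewrite Nat.add_succ_r. simpl. rewrite IH, Hz by lia. ring. }
  enough (H : is_lim_seq (sum_n f) (sum_f_R0 f N)) by exact H.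
  apply (is_lim_seq_ext_loc (fun _ => sum_f_R0 f N)).
  - exists N. intros m Hm. rewrite sum_n_Reals.
    replace m with (N + (m - N))%nat by lia. now rewrite Hk.
  - apply is_lim_seq_const.
Qed.

Lemma is_series_sq_deviation (f : nat -> R) (c m1 m2 : R) :
  is_series f 1 ->
  is_series (fun k => INR k * f k) m1 ->
  is_series (fun k => INR k * (INR k - 1) * f k) m2 ->
  is_series (fun k => (INR k - c) ^ 2 * f k) (m2 + (1 - 2 * c) * m1 + c ^ 2).
Proof.
  intros H0 H1 H2.
  replace (m2 + (1 - 2 * c) * m1 + c ^ 2)
    with (m2 + ((1 - 2 * c) * m1 + c ^ 2 * 1)) by ring.
  refine (is_series_ext _ _ _ _ (is_series_plus _ _ _ _ H2
            (is_series_plus _ _ _ _ (is_series_scal_R _ _ _ H1) (is_series_scal_R _ _ _ H0)))).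
  intro k. cbn. ring.
Qed.

Section PoissonMoments.

Variable lam : R.

Lemma poisson_pmf_nonneg (k : nat) : 0 <= lam -> 0 <= poisson_pmf lam k.
Proof.
  intros Hlam. unfold poisson_pmf. apply Rmult_le_pos.
  - apply Rmult_le_pos; [apply Rlt_le, exp_pos | apply pow_le; lra].
  - apply Rlt_le, Rinv_0_lt_compat, INR_fact_lt_0.
Qed.

Lemma is_series_poisson_pmf : is_series (poisson_pmf lam) 1.
Proof.
  pose proof (is_series_scal_R (exp (- lam)) _ _ (is_exp_Reals lam)) as H.
  rewrite <- exp_plus, Rplus_opp_l, exp_0 in H.
  revert H. apply is_series_ext. intro k.
  change (exp (- lam) * (pow_n lam k * / INR (Factorial.fact k)) = poisson_pmf lam k).
  rewrite pow_n_pow. unfold poisson_pmf, Rdiv. ring.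
Qed.

Lemma poisson_pmf_succ (j : nat) :
  INR (S j) * poisson_pmf lam (S j) = lam * poisson_pmf lam j.
Proof.
  unfold poisson_pmf.
  change (Factorial.fact (S j)) with (S j * Factorial.fact j)%nat.
  rewrite mult_INR. simpl pow. field.
  split; [apply INR_fact_neq_0 | apply not_0_INR; lia].
Qed.

Lemma is_series_poisson_mean : is_series (fun k => INR k * poisson_pmf lam k) lam.
Proof.
  apply (is_series_shift _ (fun j => lam * poisson_pmf lam j)).
  - simpl. ring.
  - exact poisson_pmf_succ.
  - pose proof (is_series_scal_R lam _ _ is_series_poisson_pmf) as H.
    rewrite Rmult_1_r in H. exact H.
Qed.

Lemma is_series_poisson_factorial2 :
  is_series (fun k => INR k * (INR k - 1) * poisson_pmf lam k) (lam ^ 2).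
Proof.
  apply (is_series_shift _ (fun j => lam * (INR j * poisson_pmf lam j))).
  - simpl. ring.
  - intro j. transitivity (INR j * (INR (S j) * poisson_pmf lam (S j))).
    + rewrite S_INR. ring.
    + rewrite poisson_pmf_succ. ring.
  - replace (lam ^ 2) with (lam * lam) by ring. apply is_series_scal_R, is_series_poisson_mean.
Qed.

End PoissonMoments.

Section BinomialMoments.

Variable p : R.

Lemma binom_pmf_nonneg (m k : nat) : 0 <= p <= 1 -> 0 <= binom_pmf m p k.
Proof.
  intros Hp. unfold binom_pmf. destruct (Nat.leb k m); [|lra].
  apply Rmult_le_pos; [apply Rmult_le_pos |]; try (apply pow_le; lra).
  unfold Binomial.C. apply Rlt_le, Rdiv_lt_0_compat; [apply INR_fact_lt_0 |].
  apply Rmult_lt_0_compat; apply INR_fact_lt_0.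
Qed.

Lemma is_series_binom_pmf (m : nat) : is_series (binom_pmf m p) 1.
Proof.
  replace 1 with (sum_f_R0 (binom_pmf m p) m).
  - apply is_series_finite_support. intros k Hk. unfold binom_pmf.
    replace (Nat.leb k m) with false; [reflexivity |].
    symmetry. apply Nat.leb_gt. lia.
  - rewrite <- (pow1 m). replace 1 with (p + (1 - p)) at 1 by ring.
    rewrite binomial. apply sum_eq. intros i Hi. unfold binom_pmf.
    replace (Nat.leb i m) with true; [reflexivity |].
    symmetry. now apply Nat.leb_le.
Qed.

(* Also valid for [m = 0], where both sides vanish despite [m - 1 = 0]. *)
Lemma binom_pmf_succ (m j : nat) :
  INR (S j) * binom_pmf m p (S j) = INR m * p * binom_pmf (m - 1) p j.
Proof.
  destruct m as [|m]; [change (binom_pmf 0 p (S j)) with 0; simpl INR; ring |].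
  rewrite Nat.sub_succ, Nat.sub_0_r. unfold binom_pmf.
  change (Nat.leb (S j) (S m)) with (Nat.leb j m).
  destruct (Nat.leb j m); [| ring].
  unfold Binomial.C. change (S m - S j)%nat with (m - j)%nat.
  change (Factorial.fact (S m)) with (S m * Factorial.fact m)%nat.
  change (Factorial.fact (S j)) with (S j * Factorial.fact j)%nat.
  rewrite !mult_INR. simpl pow. field.
  repeat split; try apply INR_fact_neq_0. apply not_0_INR. lia.
Qed.

Lemma is_series_binom_mean (m : nat) :
  is_series (fun k => INR k * binom_pmf m p k) (INR m * p).
Proof.
  apply (is_series_shift _ (fun j => INR m * p * binom_pmf (m - 1) p j)).
  - simpl. ring.
  - apply binom_pmf_succ.
  - pose proof (is_series_scal_R (INR m * p) _ _ (is_series_binom_pmf (m - 1))) as H.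
    rewrite Rmult_1_r in H. exact H.
Qed.

Lemma is_series_binom_factorial2 (m : nat) :
  is_series (fun k => INR k * (INR k - 1) * binom_pmf m p k) (INR m * (INR m - 1) * p ^ 2).
Proof.
  apply (is_series_shift _ (fun j => INR m * p * (INR j * binom_pmf (m - 1) p j))).
  - simpl. ring.
  - intro j. transitivity (INR j * (INR (S j) * binom_pmf m p (S j))).
    + rewrite S_INR. ring.
    + rewrite binom_pmf_succ. ring.
  - replace (INR m * (INR m - 1) * p ^ 2) with (INR m * p * (INR (m - 1) * p)).
    + apply is_series_scal_R, is_series_binom_mean.
    + destruct m as [|m]; [simpl; ring |].
      rewrite Nat.sub_succ, Nat.sub_0_r, S_INR. ring.
Qed.

End BinomialMoments.

Definition law_var (L : law) (n : nat) (lam : R) : R :=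
  match L with
  | Poi => lam
  | Bin => lam * (1 - lam / INR n)
  end.

Lemma law_pmf_nonneg (L : law) (n : nat) (lam : R) (k : nat) :
  (1 <= n)%nat -> 0 <= lam <= INR n -> 0 <= law_pmf L n lam k.
Proof.
  intros Hn Hlam. assert (Hn' : 1 <= INR n) by (apply (le_INR 1); exact Hn).
  destruct L; simpl.
  - apply poisson_pmf_nonneg. lra.
  - apply binom_pmf_nonneg. split.
    + apply Rdiv_le_0_compat; lra.
    + apply (Rdiv_le_1 lam (INR n)); lra.
Qed.

Lemma is_series_law_pmf (L : law) (n : nat) (lam : R) : is_series (law_pmf L n lam) 1.
Proof. destruct L; [apply is_series_poisson_pmf | apply is_series_binom_pmf]. Qed.

Lemma is_series_law_sq_deviation (L : law) (n : nat) (lam : R) : (1 <= n)%nat ->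
  is_series (fun k => (INR k - lam) ^ 2 * law_pmf L n lam k) (law_var L n lam).
Proof.
  intros Hn. assert (Hn' : INR n <> 0) by (apply not_0_INR; lia).
  destruct L; simpl.
  - pose proof (is_series_sq_deviation _ lam _ _ (is_series_poisson_pmf lam)
                  (is_series_poisson_mean lam) (is_series_poisson_factorial2 lam)) as H.
    replace (lam ^ 2 + (1 - 2 * lam) * lam + lam ^ 2) with lam in H by ring.
    exact H.
  - set (p := lam / INR n).
    pose proof (is_series_sq_deviation _ lam _ _ (is_series_binom_pmf p n)
                  (is_series_binom_mean p n) (is_series_binom_factorial2 p n)) as H.
    replace (INR n * (INR n - 1) * p ^ 2 + (1 - 2 * lam) * (INR n * p) + lam ^ 2)
      with (lam * (1 - p)) in H by (unfold p; field; exact Hn').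
    exact H.
Qed.

Lemma law_var_le (L : law) (n : nat) (lam : R) :
  (1 <= n)%nat -> 0 <= lam -> law_var L n lam <= lam.
Proof.
  intros Hn Hlam. assert (Hn' : 1 <= INR n) by (apply (le_INR 1); exact Hn).
  destruct L; simpl; [lra |].
  assert (0 <= lam / INR n) by (apply Rdiv_le_0_compat; lra). nra.
Qed.

Section Chebyshev.

Variables (f : nat -> R) (c V : R).
Hypothesis f_nonneg : forall k, 0 <= f k.
Hypothesis f_sum : is_series f 1.
Hypothesis f_sq_deviation : is_series (fun k => (INR k - c) ^ 2 * f k) V.

Variables (A : nat -> Prop) (decA : forall k, {A k} + {~ A k}).

Let restr (k : nat) : R := if decA k then f k else 0.

Lemma restr_le (k : nat) : 0 <= restr k <= f k.
Proof. unfold restr. destruct (decA k); pose proof (f_nonneg k); lra. Qed.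

Lemma ex_series_restr : ex_series restr.
Proof.
  apply (@ex_series_le R_AbsRing R_CompleteNormedModule restr f); [| exists 1; exact f_sum].
  intro k. change (Rabs (restr k) <= f k).
  pose proof (restr_le k). rewrite Rabs_pos_eq; lra.
Qed.

Lemma Series_restr_bounds : 0 <= Series restr <= 1.
Proof.
  split.
  - replace 0 with (Series (fun k => 0 * restr k))
      by (rewrite Series_scal_l; ring).
    apply Series_le; [intro k; pose proof (restr_le k); lra | exact ex_series_restr].
  - rewrite <- (is_series_unique _ _ f_sum).
    apply Series_le; [exact restr_le | exists 1; exact f_sum].
Qed.

Lemma chebyshev_restr (d : R) :
  (forall k, A k -> d ^ 2 <= (INR k - c) ^ 2) -> Series restr * d ^ 2 <= V.
Proof.
  intros Hd. rewrite <- Series_scal_r, <- (is_series_unique _ _ f_sq_deviation).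
  apply Series_le; [| exists V; exact f_sq_deviation].
  intro k. unfold restr. pose proof (f_nonneg k). pose proof (pow2_ge_0 d).
  pose proof (pow2_ge_0 (INR k - c)).
  destruct (decA k) as [Hk | _]; [pose proof (Hd k Hk) |]; split; nra.
Qed.

End Chebyshev.

Lemma tail_mul_le_sqrt (P d V : R) :
  0 <= P <= 1 -> P * d ^ 2 <= V -> d * P <= sqrt V.
Proof.
  intros HP HV.
  destruct (Rle_dec (d * P) 0) as [Hneg | Hpos]; [pose proof (sqrt_pos V); lra |].
  rewrite <- (sqrt_pow2 (d * P)) by lra. apply sqrt_le_1_alt.
  assert (HV0 : 0 <= V) by (pose proof (pow2_ge_0 d); nra).
  replace ((d * P) ^ 2) with (P * (P * d ^ 2)) by ring.
  apply (Rle_trans _ (P * V)); [apply Rmult_le_compat_l |]; nra.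
Qed.

Lemma tail_mul_le_twice (P d s : R) :
  0 <= P <= 1 -> 1 <= s -> P * d ^ 2 <= s ^ 2 + d -> d * P <= 2 * s.
Proof.
  intros HP Hs Hd.
  destruct (Rle_dec (d * P) 0) as [Hneg | Hpos]; [lra |].
  assert (Hsq : (d * P) ^ 2 <= s ^ 2 + d * P) by nra.
  nra.
Qed.

Theorem lemma7 :
  exists M1 M2 : R, 0 < M1 /\ 0 < M2 /\
  forall (n : nat) (L : law) (lam1 : R),
    (1 <= n)%nat -> 0 <= lam1 -> lam1 <= INR n ->
    (forall lam2 : R, 0 <= lam2 -> lam2 <= INR n -> lam1 <= lam2 ->
       (lam2 - lam1) * prob_ge (law_pmf L n lam1) lam2
         <= M1 * Rmin lam2 (sqrt lam2)) /\
    (forall lam2 : R, 1 <= lam2 -> lam2 <= lam1 ->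
       (lam1 - lam2) * prob_le (law_pmf L n lam1) lam2
         <= M2 * sqrt lam2).
Proof.
  exists 1, 2. split; [lra | split; [lra |]].
  intros n L lam1 Hn Hlam1 Hlam1n.
  set (f := law_pmf L n lam1).
  assert (Hf : forall k, 0 <= f k) by (intro k; apply law_pmf_nonneg; [exact Hn | lra]).
  pose proof (is_series_law_pmf L n lam1) as Hsum.
  pose proof (is_series_law_sq_deviation L n lam1 Hn) as Hvar.
  pose proof (law_var_le L n lam1 Hn Hlam1) as HV.
  split.
  - intros lam2 Hlam2 _ H12.
    set (P := prob_ge f lam2).
    assert (HP : 0 <= P <= 1)
      by exact (Series_restr_bounds f Hf Hsum _ (fun k => Rle_dec lam2 (INR k))).
    assert (Hcheb : P * (lam2 - lam1) ^ 2 <= law_var L n lam1).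
    { refine (chebyshev_restr f lam1 _ Hf Hvar _ (fun k => Rle_dec lam2 (INR k)) _ _).
      intros k Hk. nra. }
    rewrite Rmult_1_l. apply Rmin_glb; [nra |].
    apply (Rle_trans _ (sqrt (law_var L n lam1))).
    + exact (tail_mul_le_sqrt _ _ _ HP Hcheb).
    + apply sqrt_le_1_alt. lra.
  - intros lam2 Hlam2 H21.
    set (P := prob_le f lam2).
    assert (HP : 0 <= P <= 1)
      by exact (Series_restr_bounds f Hf Hsum _ (fun k => Rle_dec (INR k) lam2)).
    assert (Hcheb : P * (lam1 - lam2) ^ 2 <= law_var L n lam1).
    { refine (chebyshev_restr f lam1 _ Hf Hvar _ (fun k => Rle_dec (INR k) lam2) _ _).
      intros k Hk. nra. }
    apply (tail_mul_le_twice _ _ _ HP).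
    + rewrite <- sqrt_1. apply sqrt_le_1_alt. exact Hlam2.
    + rewrite pow2_sqrt by lra. lra.
Qed.
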